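(* Consider $\min_{x\in\mathbb{R}^n}\max_{y\in\mathbb{R}^m}f(x,y)$ with $f$ twice differentiable at $(\bar x,\bar y)$. (a) If $\nabla f(\bar x,\bar y)=0$, $\nabla^2_{yy}f(\bar x,\bar y)\prec0$, and for every $u\in\mathbb{R}^n\setminus\{0\}$ there exists $h\in\mathbb{R}^m$ with $\nabla^2f(\bar x,\bar y)((u,h),(u,h))>0$, then $(\bar x,\bar y)$ is a calm local minimax point. (b) If $(\bar x,\bar y)$ is a calm local minimax point, then $\nabla f(\bar x,\bar y)=0$, $\nabla^2_{yy}f(\bar x,\bar y)\preceq0$, and for every $u\in\mathbb{R}^n$ there exists $h\in\mathbb{R}^m$ with $\nabla^2f(\bar x,\bar y)((u,h),(u,h))\ge0$.
   Context: $f:\mathbb{R}^n\times\mathbb{R}^m\to\mathbb{R}$; $\nabla^2f(\bar x,\bar y)((u,h),(u,h))$ denotes the quadratic form of the full Hessian of $f$ at $(\bar x,\bar y)$ applied to $(u,h)$. Standing assumption: for every $x$, $\bar y$ and $\epsilon\ge0$ the maximum of $f(x,\cdot)$ over $\mathbb{B}_\epsilon(\bar y)$ is attained, where $\mathbb{B}_\epsilon(z)$ is the closed Euclidean ball. A radius function is $\tau:[0,\infty)\to[0,\infty)$ with $\tau(0)=0$, $\tau(\delta)\to0$ as $\delta\downarrow0$; calm at $0$ if $\tau(\delta)\le\kappa\delta$ on $[0,\delta_1]$ for some $\kappa,\delta_1>0$. $(\bar x,\bar y)$ is a calm local minimax point if there exist $\delta_0>0$ and a radius function $\tau$ calm at $0$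 with $f(\bar x,y)\le f(\bar x,\bar y)\le\max_{y'\in\mathbb{B}_{\tau(\delta)}(\bar y)}f(x,y')$ for all $\delta\in(0,\delta_0]$, $x\in\mathbb{B}_\delta(\bar x)$, $y\in\mathbb{B}_\delta(\bar y)$. $A\prec0$ ($\preceq0$) means negative definite (semidefinite). *)

From HB Require Import structures.
From mathcomp Require Import all_boot all_order all_algebra.
From mathcomp Require Import boolp classical_sets reals.
Set Implicit Arguments. Unset Strict Implicit. Unset Printing Implicit Defensive.
Import Order.TTheory GRing.Theory Num.Theory.
Local Open Scope ring_scope.
Local Open Scope classical_set_scope.

Section Defs.
Variable R : realType.

Definition dotv {k} (u v : 'rV[R]_k) : R := \sum_(i < k) u ord0 i * v ord0 i.
Definition enorm {k} (v : 'rV[R]_k) : R := Num.sqrt (dotv v v).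

Definition cball {k} (c : 'rV[R]_k) (r : R) : set 'rV[R]_k :=
  [set v | enorm (v - c) <= r].

Definition has_grad {k} (F : 'rV[R]_k -> R) (z g : 'rV[R]_k) : Prop :=
  forall eps : R, 0 < eps -> exists2 delta : R, 0 < delta &
    forall w, enorm (w - z) <= delta ->
      `|F w - F z - dotv (w - z) g| <= eps * enorm (w - z).

(* F is twice (Frechet) differentiable at z, with gradient g and Hessian H:
   F is differentiable on a neighbourhood of z with gradient field G,
   G z = g, and G is Frechet differentiable at z with Jacobian H
   (acting on row vectors: G w ~ G z + (w - z) *m H). *)
Definition twice_diff_at {k} (F : 'rV[R]_k -> R) (z g : 'rV[R]_k)
    (H : 'M[R]_k) : Prop :=
  exists G : 'rV[R]_k -> 'rV[R]_k, exists2 r : R, 0 < r &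
    (forall w, enorm (w - z) < r -> has_grad F w (G w)) /\ G z = g /\
    forall eps : R, 0 < eps -> exists2 delta : R, 0 < delta &
      forall w, enorm (w - z) <= delta ->
        enorm (G w - G z - (w - z) *m H) <= eps * enorm (w - z).

Definition qform {k} (A : 'M[R]_k) (v : 'rV[R]_k) : R := (v *m A *m v^T) ord0 ord0.

Definition negdef {k} (A : 'M[R]_k) : Prop := forall h, h != 0 -> qform A h < 0.
Definition negsemidef {k} (A : 'M[R]_k) : Prop := forall h, qform A h <= 0.

(* Standing assumption: for every x, ybar and eps >= 0 the maximum of f(x,.)
   over the closed ball B_eps(ybar) is attained. *)
Definition max_attained {n m} (f : 'rV[R]_n -> 'rV[R]_m -> R) : Prop :=
  forall (x : 'rV[R]_n) (c : 'rV[R]_m) (eps : R), 0 <= eps ->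
    exists2 y0, cball c eps y0 & forall y, cball c eps y -> f x y <= f x y0.

(* max_{y' in B_eps(c)} f(x, y'), written as the supremum of the image
   (it is attained under the standing assumption). *)
Definition ballmax {n m} (f : 'rV[R]_n -> 'rV[R]_m -> R) (x : 'rV[R]_n)
    (c : 'rV[R]_m) (eps : R) : R :=
  sup [set f x y | y in cball c eps].

Definition radius_fun (tau : R -> R) : Prop :=
  [/\ tau 0 = 0, (forall d, 0 <= d -> 0 <= tau d) &
      forall e : R, 0 < e -> exists2 d0 : R, 0 < d0 &
        forall d, 0 < d -> d <= d0 -> tau d <= e].

Definition calm_at0 (tau : R -> R) : Prop :=
  exists kappa : R, exists2 d1 : R, 0 < kappa /\ 0 < d1 &
    forall d, 0 <= d -> d <= d1 -> tau d <= kappa * d.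

Definition calm_local_minimax {n m} (f : 'rV[R]_n -> 'rV[R]_m -> R)
    (xb : 'rV[R]_n) (yb : 'rV[R]_m) : Prop :=
  exists2 d0 : R, 0 < d0 & exists tau : R -> R,
    [/\ radius_fun tau, calm_at0 tau &
      forall d : R, 0 < d -> d <= d0 ->
        forall x y, cball xb d x -> cball yb d y ->
          f xb y <= f xb yb /\ f xb yb <= ballmax f x yb (tau d)].

End Defs.

(* Sufficiency: since the y-block of the Hessian is negative definite, completing the square
   in y yields a linear response y = yb + (x - xb) S maximising the second-order model, and
   along it the model is the positive definite form u |-> H((u, u S), (u, u S)).  Hence f(x, .)
   exceeds f(xb, yb) somewhere in the ball of radius (1 + |S|) |x - xb| around yb, so the
   radius function can be taken linear.
   Necessity: a calm radius function puts a maximiser y of f(xb + t u, .) within O(t) of yb, so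
   h = (y - yb) / t stays in a fixed ball.  Expanding f to first, resp. second, order along
   t (u, h) and letting t -> 0 gives the gradient and Hessian conditions; the direction h for
   u is a maximiser of H((u, .), (u, .)) over that ball. *)

From HB Require Import structures.
From mathcomp Require Import all_boot all_order all_algebra.
From mathcomp Require Import boolp classical_sets reals.
From mathcomp Require Import all_classical all_reals all_analysis.
From mathcomp Require Import ring lra.
Import Order.TTheory GRing.Theory Num.Theory.
Import numFieldTopology.Exports numFieldNormedType.Exports.
Local Open Scope ring_scope.
Local Open Scope classical_set_scope.
Set Implicit Arguments. Unset Strict Implicit. Unset Printing Implicit Defensive.

Section Euclid.
Variable R : realType.

Lemma dotvC k (u v : 'rV[R]_k) : dotv u v = dotv v u.
Proof. by rewrite /dotv; apply: eq_bigr => i _; rewrite mulrC. Qed.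

Lemma dotvDl k (u w v : 'rV[R]_k) : dotv (u + w) v = dotv u v + dotv w v.
Proof. by rewrite /dotv -big_split; apply: eq_bigr => i _; rewrite mxE mulrDl. Qed.

Lemma dotvZl k (a : R) (u v : 'rV[R]_k) : dotv (a *: u) v = a * dotv u v.
Proof. by rewrite /dotv mulr_sumr; apply: eq_bigr => i _; rewrite mxE mulrA. Qed.

Lemma dotvNl k (u v : 'rV[R]_k) : dotv (- u) v = - dotv u v.
Proof. by rewrite -scaleN1r dotvZl mulN1r. Qed.

Lemma dotvBl k (u w v : 'rV[R]_k) : dotv (u - w) v = dotv u v - dotv w v.
Proof. by rewrite dotvDl dotvNl. Qed.

Lemma dotv0l k (v : 'rV[R]_k) : dotv 0 v = 0.
Proof. by rewrite /dotv big1 // => i _; rewrite mxE mul0r. Qed.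

Lemma dotvDr k (u w v : 'rV[R]_k) : dotv v (u + w) = dotv v u + dotv v w.
Proof. by rewrite !(dotvC v) dotvDl. Qed.

Lemma dotvZr k (a : R) (u v : 'rV[R]_k) : dotv v (a *: u) = a * dotv v u.
Proof. by rewrite !(dotvC v) dotvZl. Qed.

Lemma dotvBr k (u w v : 'rV[R]_k) : dotv v (u - w) = dotv v u - dotv v w.
Proof. by rewrite !(dotvC v) dotvBl. Qed.

Lemma dotv0r k (v : 'rV[R]_k) : dotv v 0 = 0.
Proof. by rewrite dotvC dotv0l. Qed.

Lemma dotv_ge0 k (v : 'rV[R]_k) : 0 <= dotv v v.
Proof. by apply: sumr_ge0 => i _; rewrite -expr2 sqr_ge0. Qed.

Lemma dotv_le0_eq0 k (v : 'rV[R]_k) : dotv v v <= 0 -> v = 0.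
Proof.
move=> v_le0; have v0 : dotv v v = 0 by apply/eqP; rewrite eq_le v_le0 dotv_ge0.
apply/rowP => i; rewrite mxE.
have sq_ge0 (j : 'I_k) : true -> 0 <= v ord0 j * v ord0 j by rewrite -expr2 sqr_ge0.
by move: (psumr_eq0P sq_ge0 v0 (i := i) isT) => /eqP; rewrite -expr2 sqrf_eq0 => /eqP.
Qed.

Lemma dotv_row_mx n m (a c : 'rV[R]_n) (b d : 'rV[R]_m) :
  dotv (row_mx a b) (row_mx c d) = dotv a c + dotv b d.
Proof.
rewrite /dotv big_split_ord /=; congr (_ + _); apply: eq_bigr => i _;
by rewrite ?row_mxEl ?row_mxEr.
Qed.

Lemma enorm_ge0 k (v : 'rV[R]_k) : 0 <= enorm v.
Proof. exact: sqrtr_ge0. Qed.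

Lemma enorm_sq k (v : 'rV[R]_k) : enorm v ^+ 2 = dotv v v.
Proof. by rewrite /enorm sqr_sqrtr // dotv_ge0. Qed.

Lemma enorm_eq0 k (v : 'rV[R]_k) : enorm v = 0 -> v = 0.
Proof. by move=> v0; apply: dotv_le0_eq0; rewrite -enorm_sq v0 expr0n. Qed.

Lemma enorm0 k : enorm (0 : 'rV[R]_k) = 0.
Proof. by rewrite /enorm dotv0l sqrtr0. Qed.

Lemma enormZ k (a : R) (v : 'rV[R]_k) : enorm (a *: v) = `|a| * enorm v.
Proof. by rewrite /enorm dotvZl dotvZr mulrA -expr2 sqrtrM ?sqr_ge0 // sqrtr_sqr. Qed.

Lemma enormN k (v : 'rV[R]_k) : enorm (- v) = enorm v.
Proof. by rewrite -scaleN1r enormZ normrN1 mul1r. Qed.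

Lemma enorm_le k (a : R) (v : 'rV[R]_k) : 0 <= a -> dotv v v <= a ^+ 2 -> enorm v <= a.
Proof.
by move=> a0 va; rewrite /enorm -(ger0_norm a0) -sqrtr_sqr ler_sqrt ?sqr_ge0 // ger0_norm.
Qed.

Lemma dotv_le_enorm k (v : 'rV[R]_k) (a : R) : enorm v <= a -> dotv v v <= a ^+ 2.
Proof.
by move=> va; rewrite -enorm_sq ler_sqr ?nnegrE ?enorm_ge0 // (le_trans (enorm_ge0 v)).
Qed.

Lemma enorm_coord k (v : 'rV[R]_k) i : `|v ord0 i| <= enorm v.
Proof.
rewrite -(sqrtr_sqr (v ord0 i)) /enorm ler_sqrt; last exact: dotv_ge0.
by rewrite /dotv (bigD1 i) //= -expr2 lerDl; apply: sumr_ge0 => j _; rewrite -expr2 sqr_ge0.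
Qed.

Lemma dotv_CauchySchwarz k (u v : 'rV[R]_k) : `|dotv u v| <= enorm u * enorm v.
Proof.
(* Sum the coordinatewise AM-GM inequality with weight l, then take l = |v| / |u|. *)
have amgm l : 0 < l -> 2 * `|dotv u v| <= l * dotv u u + l^-1 * dotv v v.
  move=> l0; apply: le_trans (_ : 2 * \sum_i `|u ord0 i * v ord0 i| <= _).
    by rewrite ler_pM2l // ler_norm_sum.
  rewrite /dotv !mulr_sumr -big_split; apply: ler_sum => i _.
  set a := `|u ord0 i|; set b := `|v ord0 i|.
  have sq_abs (x : R) : x * x = `|x| * `|x|.
    by rewrite -normrM ger0_norm // -expr2 sqr_ge0.
  rewrite sq_abs [v _ _ * _]sq_abs normrM -/a -/b -subr_ge0.
  have -> : l * (a * a) + l^-1 * (b * b) - 2 * (a * b) = l^-1 * (l * a - b) ^+ 2.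
    by field; rewrite gt_eqF.
  by rewrite mulr_ge0 ?sqr_ge0 // invr_ge0 ltW.
have [u0|un0] := eqVneq (enorm u) 0.
  by rewrite (enorm_eq0 u0) dotv0l normr0 enorm0 mul0r.
have [v0|vn0] := eqVneq (enorm v) 0.
  by rewrite (enorm_eq0 v0) dotv0r normr0 enorm0 mulr0.
have up : 0 < enorm u by rewrite lt_def un0 enorm_ge0.
have vp : 0 < enorm v by rewrite lt_def vn0 enorm_ge0.
have := amgm _ (divr_gt0 vp up); rewrite -!enorm_sq invf_div.
have -> : enorm v / enorm u * enorm u ^+ 2 + enorm u / enorm v * enorm v ^+ 2
   = 2 * (enorm u * enorm v) by field; rewrite ?un0 ?vn0.
by rewrite ler_pM2l.
Qed.

Lemma enormD k (u v : 'rV[R]_k) : enorm (u + v) <= enorm u + enorm v.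
Proof.
apply: enorm_le; first by rewrite addr_ge0 ?enorm_ge0.
rewrite dotvDl !dotvDr sqrrD -!enorm_sq (dotvC v u).
have := le_trans (ler_norm _) (dotv_CauchySchwarz u v); lra.
Qed.

Lemma enorm_row_mx n m (a : 'rV[R]_n) (b : 'rV[R]_m) :
  enorm (row_mx a b) <= enorm a + enorm b.
Proof.
have -> : row_mx a b = row_mx a 0 + row_mx 0 b by rewrite add_row_mx addr0 add0r.
apply: le_trans (enormD _ _) _.
by rewrite /enorm !dotv_row_mx !dotv0l addr0 add0r.
Qed.

Lemma enorm_mulmx_bounded k l (M : 'M[R]_(k, l)) :
  exists2 L, 0 <= L & forall u, enorm (u *m M) <= L * enorm u.
Proof.
exists (\sum_(j < l) \sum_(i < k) `|M i j|).
  by apply: sumr_ge0 => j _; apply: sumr_ge0.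
have enorm_le_l1 (v : 'rV[R]_l) : enorm v <= \sum_j `|v ord0 j|.
  apply: enorm_le; first exact: sumr_ge0.
  rewrite /dotv expr2 mulr_suml; apply: ler_sum => i _.
  apply: le_trans (_ : `|v ord0 i| * `|v ord0 i| <= _); first by rewrite -normrM ler_norm.
  by apply: ler_wpM2l => //; rewrite (bigD1 i) //= lerDl sumr_ge0.
move=> u; rewrite mulr_suml; apply: le_trans (enorm_le_l1 _) _; apply: ler_sum => j _.
rewrite mxE mulr_suml; apply: le_trans (ler_norm_sum _ _ _) _; apply: ler_sum => i _.
by rewrite normrM mulrC ler_wpM2l ?enorm_coord.
Qed.

End Euclid.

Section QuadraticForms.
Variable R : realType.

Definition bform p q (a : 'rV[R]_p) (M : 'M[R]_(p, q)) (b : 'rV[R]_q) : R :=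
  (a *m M *m b^T) ord0 ord0.

Lemma bformT p q (a : 'rV[R]_p) M (b : 'rV[R]_q) : bform a M b = bform b M^T a.
Proof.
have tr11 (A : 'M[R]_1) : A^T = A by apply/matrixP => i j; rewrite !ord1 mxE.
by rewrite /bform -[a *m M *m b^T]tr11 !trmx_mul trmxK mulmxA.
Qed.

Lemma bformDl p q (a c : 'rV[R]_p) M (b : 'rV[R]_q) :
  bform (a + c) M b = bform a M b + bform c M b.
Proof. by rewrite /bform !mulmxDl mxE. Qed.

Lemma bformDr p q (a : 'rV[R]_p) M (b c : 'rV[R]_q) :
  bform a M (b + c) = bform a M b + bform a M c.
Proof. by rewrite /bform linearD /= mulmxDr mxE. Qed.

Lemma bformDm p q (a : 'rV[R]_p) M N (b : 'rV[R]_q) :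
  bform a (M + N) b = bform a M b + bform a N b.
Proof. by rewrite /bform mulmxDr mulmxDl mxE. Qed.

Lemma bform0l p q M (b : 'rV[R]_q) : bform (0 : 'rV[R]_p) M b = 0.
Proof. by rewrite /bform !mul0mx mxE. Qed.

Lemma qform_dot k (A : 'M[R]_k) v : qform A v = dotv (v *m A) v.
Proof. by rewrite /qform /dotv mxE; apply: eq_bigr => i _; rewrite [v^T _ _]mxE. Qed.

Lemma qform0 k (A : 'M[R]_k) : qform A 0 = 0.
Proof. by rewrite qform_dot mul0mx dotv0l. Qed.

Lemma qformZ k (A : 'M[R]_k) (a : R) v : qform A (a *: v) = a ^+ 2 * qform A v.
Proof. by rewrite !qform_dot -scalemxAl dotvZl dotvZr mulrA expr2. Qed.

Lemma qformN k (A : 'M[R]_k) v : qform (- A) v = - qform A v.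
Proof. by rewrite !qform_dot mulmxN dotvNl. Qed.

Lemma qformT k (A : 'M[R]_k) v : qform A^T v = qform A v.
Proof. by rewrite /qform -/(bform _ _ _) bformT trmxK. Qed.

Lemma qform_mulmx k l (A : 'M[R]_k) (N : 'M[R]_(l, k)) u :
  qform A (u *m N) = qform (N *m A *m N^T) u.
Proof. by rewrite /qform trmx_mul !mulmxA. Qed.

Lemma qformD k (A : 'M[R]_k) a b :
  qform A (a + b) = qform A a + qform A b + bform a (A + A^T) b.
Proof. by rewrite /qform -!/(bform _ _ _) bformDl !bformDr bformDm (bformT b A a); ring. Qed.

Lemma qform_row_mx n m (H : 'M[R]_(n + m)) u h :
  qform H (row_mx u h) =
    qform (ulsubmx H) u + bform u (ursubmx H + (dlsubmx H)^T) h + qform (drsubmx H) h.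
Proof.
have entryD (A B : 'M[R]_1) : (A + B) ord0 ord0 = A ord0 ord0 + B ord0 ord0 by rewrite mxE.
rewrite bformDm (bformT u (dlsubmx H)^T) trmxK /qform /bform.
rewrite -{1}(submxK H) mul_row_block tr_row_mx mul_row_col !mulmxDl !entryD; ring.
Qed.

Lemma qform_row0 n m (H : 'M[R]_(n + m)) h :
  qform H (row_mx 0 h) = qform (drsubmx H) h.
Proof. by rewrite qform_row_mx qform0 bform0l !add0r. Qed.

End QuadraticForms.

Section Compactness.
Variable R : realType.

Lemma continuous_sum k (I : Type) (s : seq I) (F : I -> 'rV[R]_k -> R) :
  (forall i, continuous (F i)) -> continuous (fun v => \sum_(i <- s) F i v).
Proof.
move=> cF; elim: s => [|a s IH].
  have -> : (fun v : 'rV[R]_k => \sum_(i <- [::]) F i v) = fun=> 0.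
    by apply: funext => w; rewrite big_nil.
  by move=> v; exact: cst_continuous.
have -> : (fun v => \sum_(i <- a :: s) F i v) = F a + (fun v => \sum_(i <- s) F i v).
  by apply: funext => w; rewrite big_cons.
by move=> v; apply: continuousD; [exact: cF | exact: IH].
Qed.

Lemma continuous_qform_comp k l (A : 'M[R]_k) (phi : 'rV[R]_l -> 'rV[R]_k) :
  (forall i, continuous (fun h => phi h ord0 i)) -> continuous (fun h => qform A (phi h)).
Proof.
move=> cphi; have -> : (fun h => qform A (phi h)) =
    fun h => \sum_i (\sum_j phi h ord0 j * A j i) * phi h ord0 i.
  by apply: funext => w; rewrite qform_dot /dotv; apply: eq_bigr => i _; rewrite mxE.
apply: continuous_sum => i v; apply: continuousM; last exact: cphi.
by apply: continuous_sum => j w; apply: continuousM; [exact: cphi | exact: cst_continuous].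
Qed.

Lemma continuous_qform k (A : 'M[R]_k) : continuous (qform A).
Proof. by apply: (continuous_qform_comp (phi := id)) => i; exact: coord_continuous. Qed.

Lemma continuous_qform_row_mx n m (H : 'M[R]_(n + m)) (u : 'rV[R]_n) :
  continuous (fun h : 'rV[R]_m => qform H (row_mx u h)).
Proof.
apply: continuous_qform_comp => i; have [j ->|j ->] := split_ordP i.
  have -> : (fun h : 'rV[R]_m => row_mx u h ord0 (lshift m j)) = fun=> u ord0 j.
    by apply: funext => h; rewrite row_mxEl.
  by move=> h; exact: cst_continuous.
have -> : (fun h : 'rV[R]_m => row_mx u h ord0 (rshift n j)) = fun h => h ord0 j.
  by apply: funext => h; rewrite row_mxEr.
exact: coord_continuous.
Qed.

Lemma compact_dotv_shell k (lo hi : R) :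
  compact [set v : 'rV[R]_k | lo <= dotv v v /\ dotv v v <= hi].
Proof.
set sq := fun v : 'rV[R]_k => dotv v v.
have csq : continuous sq.
  have -> : sq = qform 1%:M by apply: funext => w; rewrite /sq qform_dot mulmx1.
  exact: continuous_qform.
have closed_shell : closed (sq @^-1` [set x | lo <= x] `&` sq @^-1` [set x | x <= hi]).
  by apply: closedI; apply: closed_comp => // v _; exact: csq.
set r := `|hi| + 1; apply: (subclosed_compact closed_shell).
  exact: (@rV_compact R k (fun=> `[- r, r]%classic) (fun=> @segment_compact R _ _)).
move=> v [_ vhi] i /=; rewrite in_itv /= -ler_norml.
apply: le_trans (enorm_coord _ _) _; apply: enorm_le; first by rewrite addr_ge0.
have := ler_norm hi; move: vhi; rewrite /r /sq /=; nra.
Qed.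

Lemma qform_coercive k (A : 'M[R]_k) : (forall v, v != 0 -> 0 < qform A v) ->
  exists2 c, 0 < c & forall v, c * dotv v v <= qform A v.
Proof.
move=> Apos; set S := [set v : 'rV[R]_k | 1 <= dotv v v /\ dotv v v <= 1].
have unit_scale (v : 'rV[R]_k) : v != 0 -> v = enorm v *: ((enorm v)^-1 *: v) /\
    dotv ((enorm v)^-1 *: v) ((enorm v)^-1 *: v) = 1.
  move=> vn0; have en0 : enorm v != 0 by apply: contra vn0 => /eqP/enorm_eq0 ->.
  split; first by rewrite scalerA divff // scale1r.
  by rewrite dotvZl dotvZr -enorm_sq mulrA -expr2 exprVn mulVf // expf_neq0.
have [S0|S_empty] := pselect (S !=set0); last first.
  exists 1 => // v; have [->|vn0] := eqVneq v 0; first by rewrite dotv0l mulr0 qform0.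
  exfalso; apply: S_empty; have [_ w1] := unit_scale v vn0.
  by exists ((enorm v)^-1 *: v); rewrite /S /= w1 lexx.
have cS : {within S, continuous (qform A)}.
  by apply: continuous_subspaceT => v; exact: continuous_qform.
have [c cS' cmin] := EVT_min_rV S0 (@compact_dotv_shell k 1 1) cS.
have cn0 : c != 0.
  by apply/eqP => c0; move: cS'; rewrite c0 inE /S /= dotv0l ler10 => -[].
exists (qform A c); first exact: Apos.
move=> v; have [->|vn0] := eqVneq v 0; first by rewrite dotv0l mulr0 qform0.
have [ev w1] := unit_scale v vn0.
rewrite -enorm_sq {2}ev qformZ mulrC ler_wpM2l ?sqr_ge0 //.
by apply: cmin; rewrite inE /S /= w1 lexx.
Qed.

Lemma EVT_max_enorm_ball k (q : 'rV[R]_k -> R) (r : R) : 0 <= r -> continuous q ->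
  exists2 c, enorm c <= r & forall h, enorm h <= r -> q h <= q c.
Proof.
move=> r0 cq; set S := [set v : 'rV[R]_k | 0 <= dotv v v /\ dotv v v <= r ^+ 2].
have S0 : S !=set0 by exists 0; rewrite /S /= dotv0l lexx sqr_ge0.
have cS : {within S, continuous q} by apply: continuous_subspaceT => v; exact: cq.
have [c cS' cmax] := EVT_max_rV S0 (@compact_dotv_shell k 0 (r ^+ 2)) cS.
move: cS'; rewrite inE /S /= => -[_ cr]; exists c; first exact: enorm_le.
by move=> h hr; apply: cmax; rewrite inE /S /= dotv_ge0 dotv_le_enorm.
Qed.

End Compactness.

Section Taylor.
Variable R : realType.

Lemma is_derive_eps (psi : R -> R) t d :
  (forall e, 0 < e -> exists2 dl, 0 < dl & forall s, `|s| <= dl ->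
     `|psi (t + s) - psi t - s * d| <= e * `|s|) -> is_derive t 1 psi d.
Proof.
move=> psi_eps.
have quotient_cvg :
    (fun h : R => h^-1 *: ((psi \o shift t) (h *: 1) - psi t)) @ 0^' --> d.
  apply/cvgrPdist_le => e e0; have [dl dl0 hdl] := psi_eps e e0.
  exists dl => // s /= sdl sn0; rewrite sub0r normrN in sdl.
  have := hdl s (ltW sdl).
  rewrite -[_ *: 1]/(_ * 1) mulr1 (addrC s t) -[_ *: _]/(_ * _) => hs.
  have -> : d - s^-1 * (psi (t + s) - psi t) = - s^-1 * (psi (t + s) - psi t - s * d).
    by field.
  by rewrite normrM normrN normfV mulrC ler_pdivrMr ?normr_gt0.
apply: DeriveDef; first by apply/cvg_ex; exists d.
exact: cvg_lim quotient_cvg.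
Qed.

(* Parametrised so that s = t is the point w. *)
Lemma is_derive_line k (F : 'rV[R]_k -> R) (w v gw : 'rV[R]_k) (q p t : R) :
  has_grad F w gw ->
  is_derive t 1 (fun s : R => F (w - t *: v + s *: v) - s * q - s ^+ 2 * p)
     (dotv v gw - q - 2 * t * p).
Proof.
move=> hg; apply: is_derive_eps => e e0.
have ev1 : 0 < enorm v + 1 by rewrite ltr_wpDl ?enorm_ge0.
have p1 : 0 < `|p| + 1 by rewrite ltr_wpDl.
have [dl dl0 hdl] := hg (e / 2 / (enorm v + 1)) (ltac:(by rewrite !divr_gt0)).
exists (Num.min (dl / (enorm v + 1)) (e / 2 / (`|p| + 1))); first by rewrite lt_min !divr_gt0.
move=> s; rewrite le_min !ler_pdivlMr // => /andP[sv sp].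
have hsv : enorm (s *: v) <= dl.
  by rewrite enormZ; apply: le_trans sv; apply: ler_wpM2l => //; rewrite lerDl.
rewrite scalerDl addrA subrK.
have := hdl (w + s *: v); rewrite [_ + _ - w]addrC addKr => /(_ hsv); rewrite dotvZl => hw.
have -> : F (w + s *: v) - (t + s) * q - (t + s) ^+ 2 * p - (F w - t * q - t ^+ 2 * p)
     - s * (dotv v gw - q - 2 * t * p)
   = (F (w + s *: v) - F w - s * dotv v gw) - s * (s * p) by ring.
apply: le_trans (ler_normB _ _) _.
have lin_part : e / 2 / (enorm v + 1) * enorm (s *: v) <= e / 2 * `|s|.
  rewrite enormZ; apply: (@le_trans _ _ (e / 2 / (enorm v + 1) * (`|s| * (enorm v + 1)))).
    by rewrite ler_pM2l ?divr_gt0 // ler_wpM2l // lerDl.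
  by rewrite mulrCA divfK ?gt_eqF // mulrC.
have quad_part : `|s * (s * p)| <= e / 2 * `|s|.
  rewrite normrM [e / 2 * _]mulrC; apply: ler_wpM2l => //; rewrite normrM.
  rewrite ler_pdivlMr //; apply: le_trans sp; rewrite ler_pM2r //.
  by apply: ler_wpM2l => //; rewrite lerDl.
have := le_trans hw lin_part; lra.
Qed.

Lemma twice_diff_at_has_grad k (F : 'rV[R]_k -> R) z g H :
  twice_diff_at F z g H -> has_grad F z g.
Proof. by case=> G [r r0 [hg [<- _]]]; apply: hg; rewrite subrr enorm0. Qed.

Lemma twice_diff_taylor k (F : 'rV[R]_k -> R) z g H : twice_diff_at F z g H ->
  forall e, 0 < e -> exists2 dl, 0 < dl & forall v, enorm v <= dl ->
   `|F (z + v) - F z - dotv v g - qform H v / 2| <= e * dotv v v.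
Proof.
(* Mean value theorem for the corrected function along the segment [z, z + v]. *)
case=> G [r r0 [hg [Gz hH]]] e e0.
have [d1 d10 hd1] := hH e e0.
exists (Num.min d1 (r / 2)); first by rewrite lt_min d10 divr_gt0.
move=> v; rewrite le_min => /andP[hv1 hv2].
set q := dotv v g; set p := qform H v / 2.
set phi := fun s : R => F (z + s *: v) - s * q - s ^+ 2 * p.
have phi_derive (t : R) : 0 <= t -> t <= 1 ->
    is_derive t 1 phi (dotv v (G (z + t *: v)) - q - 2 * t * p).
  move=> t0 t1; have hw : enorm ((z + t *: v) - z) < r.
    rewrite addrC addKr enormZ ger0_norm //.
    apply: (@le_lt_trans _ _ (enorm v)); first by rewrite ler_piMl ?enorm_ge0.
    by apply: le_lt_trans hv2 _; rewrite ltr_pdivrMr //; lra.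
  have := is_derive_line v q p t (hg _ hw).
  by under eq_fun do rewrite addrK.
have cphi : {within `[0, 1], continuous phi}.
  apply: derivable_within_continuous => x; rewrite in_itv /= => /andP[x0 x1].
  by case: (phi_derive x x0 x1).
have phi_derive_open (x : R) : x \in `]0, 1[%R ->
    is_derive x 1 phi (dotv v (G (z + x *: v)) - q - 2 * x * p).
  by rewrite in_itv /= => /andP[x0 x1]; apply: phi_derive; apply: ltW.
have [c c01 phi_mvt] := MVT_segment ler01 phi_derive_open cphi.
move: c01; rewrite in_itv /= => /andP[c0 c1].
have -> : F (z + v) - F z - q - p = phi 1 - phi 0.
  by rewrite /phi scale1r scale0r addr0 expr1n expr0n /=; ring.
rewrite phi_mvt subr0 mulr1.
have zcv : z + c *: v - z = c *: v by rewrite addrC addKr.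
have -> : dotv v (G (z + c *: v)) - q - 2 * c * p
    = dotv v (G (z + c *: v) - G z - (z + c *: v - z) *m H).
  rewrite zcv !dotvBr Gz /q /p qform_dot (dotvC (v *m H)) -scalemxAl dotvZr.
  by field.
have hcv : enorm (z + c *: v - z) = c * enorm v by rewrite zcv enormZ ger0_norm.
apply: le_trans (dotv_CauchySchwarz _ _) _.
have hb : enorm (z + c *: v - z) <= d1.
  by rewrite hcv; apply: le_trans hv1; rewrite ler_piMl ?enorm_ge0.
apply: le_trans (_ : enorm v * (e * enorm (z + c *: v - z)) <= _).
  by apply: ler_wpM2l; [exact: enorm_ge0 | exact: hd1].
rewrite hcv -enorm_sq.
have : 0 <= e * enorm v * enorm v * (1 - c).
  apply: mulr_ge0; last by rewrite subr_ge0.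
  by rewrite -mulrA; apply: mulr_ge0; [exact: ltW | apply: mulr_ge0; exact: enorm_ge0].
nra.
Qed.

End Taylor.

Section RealFacts.
Variable R : realType.

Lemma exists_small_scale (a b c d : R) : 0 < c -> 0 < d ->
  exists2 t, 0 < t & t * a <= c /\ t * b <= d.
Proof.
move=> c0 d0; set s := `|a| + `|b| + 1.
have s0 : 0 < s by rewrite ltr_wpDl // addr_ge0.
exists (Num.min c d / s); first by rewrite divr_gt0 // lt_min c0 d0.
have scale_le x : x <= s -> Num.min c d / s * x <= Num.min c d.
  move=> xs; apply: (@le_trans _ _ (Num.min c d / s * s)); last by rewrite divfK ?gt_eqF.
  by apply: ler_wpM2l => //; apply: divr_ge0; [rewrite le_min !ltW | exact: ltW].
have [a_s b_s] : a <= s /\ b <= s.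
  rewrite /s; have := ler_norm a; have := ler_norm b.
  by have := normr_ge0 a; have := normr_ge0 b; lra.
split; first by apply: le_trans (scale_le _ a_s) _; rewrite ge_min lexx.
by apply: le_trans (scale_le _ b_s) _; rewrite ge_min lexx orbT.
Qed.

Lemma le0_of_forall_le_eps (a b : R) : 0 <= b -> (forall e, 0 < e -> a <= e * b) -> a <= 0.
Proof.
move=> b0 small; rewrite leNgt; apply/negP => a0.
have e0 : 0 < a / (2 * (b + 1)) by rewrite divr_gt0 // mulr_gt0 // ltr_wpDl.
have := small _ e0.
have : a / (2 * (b + 1)) * b <= a / 2.
  rewrite -subr_ge0.
  have -> : a / 2 - a / (2 * (b + 1)) * b = a / (2 * (b + 1)).
    by field; rewrite gt_eqF // ltr_wpDl.
  exact: ltW.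
lra.
Qed.

End RealFacts.

Section BallMax.
Variable R : realType.

Lemma ballmax_ub n m (f : 'rV[R]_n -> 'rV[R]_m -> R) x c e y :
  max_attained f -> 0 <= e -> cball c e y -> f x y <= ballmax f x c e.
Proof.
move=> hm e0 hy; have [y0 hy0 y0_max] := hm x c e e0.
apply: sup_upper_bound; last by exists y.
split; first by exists (f x y); exists y.
by exists (f x y0) => _ [z hz <-]; exact: y0_max.
Qed.

Lemma ballmax_attained n m (f : 'rV[R]_n -> 'rV[R]_m -> R) x c e :
  max_attained f -> 0 <= e -> exists2 y, cball c e y & ballmax f x c e = f x y.
Proof.
move=> hm e0; have [y0 hy0 y0_max] := hm x c e e0.
exists y0 => //; apply/eqP; rewrite eq_le ballmax_ub // andbT.
by apply: ge_sup; [exists (f x y0); exists y0 | move=> _ [z hz <-]; exact: y0_max].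
Qed.

End BallMax.

Section LocalExpansions.
Variables (R : realType) (n m : nat) (f : 'rV[R]_n -> 'rV[R]_m -> R).
Variables (xb : 'rV[R]_n) (yb : 'rV[R]_m).

Local Notation F := (fun z : 'rV[R]_(n + m) => f (lsubmx z) (rsubmx z)).

Lemma has_grad_row_mx_scaled g : has_grad F (row_mx xb yb) g ->
  forall e, 0 < e -> exists2 dl, 0 < dl & forall t a b, 0 <= t ->
    t * (enorm a + enorm b) <= dl ->
    `|f (xb + t *: a) (yb + t *: b) - f xb yb - t * dotv (row_mx a b) g|
      <= t * (e * (enorm a + enorm b)).
Proof.
move=> hg e e0; have [dl dl0 hdl] := hg e e0; exists dl => // t a b t0 hab.
have hv : enorm (t *: row_mx a b) <= t * (enorm a + enorm b).
  by rewrite enormZ ger0_norm //; apply: ler_wpM2l => //; exact: enorm_row_mx.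
have := hdl (row_mx xb yb + t *: row_mx a b).
rewrite addrAC subrr add0r => /(_ (le_trans hv hab)) /=.
rewrite dotvZl scale_row_mx add_row_mx !row_mxKl !row_mxKr => /le_trans; apply.
by rewrite mulrCA -scale_row_mx; apply: ler_wpM2l; [exact: ltW e0 | exact: hv].
Qed.

Lemma twice_diff_row_mx_scaled H : twice_diff_at F (row_mx xb yb) 0 H ->
  forall e, 0 < e -> exists2 dl, 0 < dl & forall t a b, 0 <= t ->
    t * (enorm a + enorm b) <= dl ->
    `|f (xb + t *: a) (yb + t *: b) - f xb yb - t ^+ 2 * (qform H (row_mx a b) / 2)|
      <= t ^+ 2 * (e * (dotv a a + dotv b b)).
Proof.
move=> htd e e0; have [dl dl0 hdl] := twice_diff_taylor htd e0; exists dl => // t a b t0 hab.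
have hv : enorm (t *: row_mx a b) <= t * (enorm a + enorm b).
  by rewrite enormZ ger0_norm //; apply: ler_wpM2l => //; exact: enorm_row_mx.
have := hdl _ (le_trans hv hab) => /=.
rewrite dotv0r subr0 qformZ dotvZl dotvZr dotv_row_mx.
rewrite scale_row_mx add_row_mx !row_mxKl !row_mxKr => expansion.
rewrite [t ^+ 2 * (_ / 2)]mulrA; apply: le_trans expansion _.
by rewrite mulrA -expr2 mulrCA.
Qed.

End LocalExpansions.

Section NecessaryConditions.
Variables (R : realType) (n m : nat) (f : 'rV[R]_n -> 'rV[R]_m -> R).
Variables (xb : 'rV[R]_n) (yb : 'rV[R]_m).
Hypothesis max_att : max_attained f.
Hypothesis calm : calm_local_minimax f xb yb.

Local Notation F := (fun z : 'rV[R]_(n + m) => f (lsubmx z) (rsubmx z)).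

Lemma calm_minimax_ymax :
  exists2 d0, 0 < d0 & forall w, enorm w <= d0 -> f xb (yb + w) <= f xb yb.
Proof.
have [d0 d00 [tau [_ _ saddle]]] := calm; exists d0 => // w hw.
have xb_in : cball xb d0 xb by rewrite /cball /= subrr enorm0 ltW.
have y_in : cball yb d0 (yb + w) by rewrite /cball /= addrAC subrr add0r.
by have [] := saddle d0 d00 (lexx _) _ _ xb_in y_in.
Qed.

Lemma calm_minimax_xwitness : exists2 K, 0 < K & exists2 d0, 0 < d0 &
  forall t u, 0 < t -> t * (enorm u + 1) <= d0 ->
    exists2 h, enorm h <= K * (enorm u + 1) & f xb yb <= f (xb + t *: u) (yb + t *: h).
Proof.
have [d0 d00 [tau [[_ tau_ge0 _] [K [d1 [K0 d10] tau_calm]] saddle]]] := calm.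
exists K => //; exists (Num.min d0 d1); first by rewrite lt_min d00 d10.
move=> t u t0; set d := t * (enorm u + 1); rewrite le_min => /andP[dd0 dd1].
have d_gt0 : 0 < d by rewrite mulr_gt0 // ltr_wpDl ?enorm_ge0.
have [y hy ymax] := ballmax_attained (xb + t *: u) yb max_att (tau_ge0 d (ltW d_gt0)).
exists (t^-1 *: (y - yb)).
  rewrite enormZ gtr0_norm ?invr_gt0 // ler_pdivrMl // mulrCA -/d.
  exact: le_trans hy (tau_calm d (ltW d_gt0) dd1).
rewrite scalerA divff ?gt_eqF // scale1r [yb + _]addrC subrK -ymax.
have x_in : cball xb d (xb + t *: u).
  by rewrite /cball /= addrAC subrr add0r enormZ gtr0_norm // ler_pM2l // lerDl.
have yb_in : cball yb d yb by rewrite /cball /= subrr enorm0 ltW.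
by have [] := saddle d d_gt0 dd0 _ _ x_in yb_in.
Qed.

Lemma calm_minimax_grad_eq0 g : has_grad F (row_mx xb yb) g -> g = 0.
Proof.
move=> /has_grad_row_mx_scaled expansion.
rewrite -[g]hsubmxK in expansion *; set gx := lsubmx g in expansion *.
set gy := rsubmx g in expansion *.
have gy0 : gy = 0.
  have [d0 d00 ymax] := calm_minimax_ymax.
  apply: dotv_le0_eq0; apply: (le0_of_forall_le_eps (enorm_ge0 gy)) => e e0.
  have [dl dl0 hdl] := expansion e e0.
  have [t t0 [tdl td0]] := exists_small_scale (enorm gy) (enorm gy) dl0 d00.
  have := hdl t 0 gy (ltW t0); rewrite enorm0 add0r => /(_ tdl) /ler_normlP[ub _].
  move: ub; rewrite scaler0 addr0 dotv_row_mx dotv0l add0r.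
  have := ymax (t *: gy); rewrite enormZ gtr0_norm // => /(_ td0) fle ub.
  have : t * dotv gy gy <= t * (e * enorm gy) by lra.
  by rewrite ler_pM2l.
have gx0 : gx = 0.
  have [K K0 [d0 d00 xwit]] := calm_minimax_xwitness.
  set r := enorm gx + K * (enorm gx + 1).
  have r0 : 0 <= r by rewrite /r; have := enorm_ge0 gx; nra.
  apply: dotv_le0_eq0; apply: (le0_of_forall_le_eps r0) => e e0.
  have [dl dl0 hdl] := expansion e e0.
  have [t t0 [td0 tdl]] := exists_small_scale (enorm gx + 1) r d00 dl0.
  rewrite -(enormN gx) in td0; have [h hK fle] := xwit t (- gx) t0 td0.
  rewrite enormN in hK; have r_ge : enorm (- gx) + enorm h <= r by rewrite enormN lerD2l.
  have := hdl t (- gx) h (ltW t0) (le_trans (ler_wpM2l (ltW t0) r_ge) tdl).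
  rewrite dotv_row_mx gy0 dotv0r addr0 dotvNl => /ler_normlP[_ ub].
  have : t * dotv gx gx <= t * (e * r).
    apply: le_trans (_ : t * (e * (enorm (- gx) + enorm h)) <= _); first by lra.
    by rewrite ler_pM2l // ler_pM2l.
  by rewrite ler_pM2l.
by rewrite gx0 gy0 row_mx0.
Qed.

Lemma calm_minimax_hess_yy H : twice_diff_at F (row_mx xb yb) 0 H -> negsemidef (drsubmx H).
Proof.
move=> /twice_diff_row_mx_scaled expansion w.
have [d0 d00 ymax] := calm_minimax_ymax.
apply: (le0_of_forall_le_eps (dotv_ge0 w)) => e e0.
have [dl dl0 hdl] := expansion (e / 2) (divr_gt0 e0 (ltr0Sn _ 1)).
have [t t0 [td0 tdl]] := exists_small_scale (enorm w) (enorm w) d00 dl0.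
have := hdl t 0 w (ltW t0); rewrite enorm0 add0r => /(_ tdl) /ler_normlP[ub _].
move: ub; rewrite scaler0 addr0 qform_row0 dotv0l add0r.
have := ymax (t *: w); rewrite enormZ gtr0_norm // => /(_ td0) fle ub.
have : t ^+ 2 * (qform (drsubmx H) w / 2) <= t ^+ 2 * (e / 2 * dotv w w) by lra.
rewrite ler_pM2l ?exprn_gt0 //; lra.
Qed.

Lemma calm_minimax_hess_dir H : twice_diff_at F (row_mx xb yb) 0 H ->
  forall u, exists h, 0 <= qform H (row_mx u h).
Proof.
move=> /twice_diff_row_mx_scaled expansion u.
have [K K0 [d0 d00 xwit]] := calm_minimax_xwitness.
set r := K * (enorm u + 1).
have r0 : 0 <= r by rewrite /r; have := enorm_ge0 u; nra.
have [c cr cmax] := EVT_max_enorm_ball r0 (continuous_qform_row_mx (H := H) (u := u)).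
exists c; rewrite -oppr_le0.
have D0 : 0 <= dotv u u + r ^+ 2 by have := dotv_ge0 u; have := sqr_ge0 r; lra.
apply: (le0_of_forall_le_eps D0) => e e0.
have [dl dl0 hdl] := expansion (e / 2) (divr_gt0 e0 (ltr0Sn _ 1)).
have [t t0 [td0 tdl]] := exists_small_scale (enorm u + 1) (enorm u + r) d00 dl0.
have [h hr fle] := xwit t u t0 td0.
have tuh : t * (enorm u + enorm h) <= dl.
  by apply: le_trans tdl; rewrite ler_pM2l // lerD2l.
have := hdl t u h (ltW t0) tuh => /ler_normlP[_ ub].
have : t ^+ 2 * (- qform H (row_mx u h) / 2) <= t ^+ 2 * (e / 2 * (dotv u u + dotv h h)).
  by lra.
rewrite ler_pM2l ?exprn_gt0 // => quad_le.
have : e * dotv h h <= e * r ^+ 2 by rewrite ler_pM2l // dotv_le_enorm.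
have := cmax h hr; lra.
Qed.

End NecessaryConditions.

Section SchurComplement.
Variable R : realType.

(* Maximiser of the strictly concave quadratic h |-> qform H (row_mx u h), as a linear
   function of u. *)
Definition schur_shift n m (H : 'M[R]_(n + m)) : 'M[R]_(n, m) :=
  - ((ursubmx H + (dlsubmx H)^T) *m invmx (drsubmx H + (drsubmx H)^T)).

Lemma negdef_addT_unitmx k (D : 'M[R]_k) : negdef D -> D + D^T \in unitmx.
Proof.
move=> Dneg; rewrite unitmxE unitfE; apply/negP => /det0P[w wn0 wD].
have : qform (D + D^T) w = 0 by rewrite qform_dot wD dotv0l.
rewrite /qform mulmxDr mulmxDl mxE -!/(qform _ _) qformT.
by have := Dneg w wn0; lra.
Qed.

Lemma qform_schur_shift n m (H : 'M[R]_(n + m)) u w : negdef (drsubmx H) ->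
  qform H (row_mx u (u *m schur_shift H + w)) =
    qform H (row_mx u (u *m schur_shift H)) + qform (drsubmx H) w.
Proof.
move=> /negdef_addT_unitmx Dunit; rewrite !qform_row_mx bformDr qformD.
have -> : bform (u *m schur_shift H) (drsubmx H + (drsubmx H)^T) w =
          - bform u (ursubmx H + (dlsubmx H)^T) w.
  have entryN (A : 'M[R]_1) : (- A) ord0 ord0 = - A ord0 ord0 by rewrite mxE.
  by rewrite /bform /schur_shift mulmxN !mulNmx entryN -!mulmxA mulKmx.
ring.
Qed.

Lemma qform_le_schur_shift n m (H : 'M[R]_(n + m)) u h : negdef (drsubmx H) ->
  qform H (row_mx u h) <= qform H (row_mx u (u *m schur_shift H)).
Proof.
move=> Dneg; rewrite -[h in qform _ (row_mx _ h)](subrKC (u *m schur_shift H)).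
rewrite qform_schur_shift // gerDl.
have [->|wn0] := eqVneq (h - u *m schur_shift H) 0; first by rewrite qform0.
exact: ltW (Dneg _ wn0).
Qed.

End SchurComplement.

Section SufficientConditions.
Variables (R : realType) (n m : nat) (f : 'rV[R]_n -> 'rV[R]_m -> R).
Variables (xb : 'rV[R]_n) (yb : 'rV[R]_m) (H : 'M[R]_(n + m)).

Local Notation F := (fun z : 'rV[R]_(n + m) => f (lsubmx z) (rsubmx z)).

Hypothesis crit : twice_diff_at F (row_mx xb yb) 0 H.
Hypothesis Dneg : negdef (drsubmx H).

Let expansion := twice_diff_row_mx_scaled crit.

Lemma negdef_hess_ymax :
  exists2 d, 0 < d & forall w, enorm w <= d -> f xb (yb + w) <= f xb yb.
Proof.
have Dpos w : w != 0 -> 0 < qform (- drsubmx H) w by rewrite qformN oppr_gt0; exact: Dneg.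
have [c c0 coerc] := qform_coercive Dpos.
have [dl dl0 hdl] := expansion (divr_gt0 c0 (ltr0Sn _ 1)).
exists dl => // w hw.
have := hdl 1 0 w ler01; rewrite enorm0 add0r mul1r => /(_ hw).
rewrite !scale1r addr0 expr1n !mul1r qform_row0 dotv0l add0r => /ler_normlP[_ ub].
by have := coerc w; rewrite qformN; lra.
Qed.

Hypothesis xpos : forall u, u != 0 -> exists h, 0 < qform H (row_mx u h).

Lemma schur_hess_xmin : exists2 d, 0 < d & forall u, enorm u <= d ->
  f xb yb <= f (xb + u) (yb + u *m schur_shift H).
Proof.
set S := schur_shift H.
have Ppos u : u != 0 -> 0 < qform (row_mx 1%:M S *m H *m (row_mx 1%:M S)^T) u.
  move=> un0; have [h hpos] := xpos un0.
  rewrite -qform_mulmx mul_mx_row mulmx1; apply: lt_le_trans hpos _.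
  exact: qform_le_schur_shift.
have [c c0 coerc] := qform_coercive Ppos.
have [L L0 SL] := enorm_mulmx_bounded S.
have L2 : 0 < 1 + L ^+ 2 by rewrite ltr_wpDr ?sqr_ge0.
have eps0 : 0 < c / (2 * (1 + L ^+ 2)) by rewrite divr_gt0 // mulr_gt0.
have [dl dl0 hdl] := expansion eps0.
exists (dl / (1 + L)); first by rewrite divr_gt0 // ltr_wpDr.
move=> u ud; have uS := SL u.
have u_uS : 1 * (enorm u + enorm (u *m S)) <= dl.
  rewrite mul1r; move: ud; rewrite ler_pdivlMr ?ltr_wpDr //; nra.
have := hdl 1 u (u *m S) ler01 u_uS.
rewrite !scale1r expr1n !mul1r => /ler_normlP[ub _].
have := coerc u; rewrite -qform_mulmx mul_mx_row mulmx1 -/S => quad_ge.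
have SS : dotv (u *m S) (u *m S) <= L ^+ 2 * dotv u u.
  by rewrite -[dotv u u]enorm_sq -exprMn; apply: dotv_le_enorm.
have : c / (2 * (1 + L ^+ 2)) * (dotv u u + dotv (u *m S) (u *m S)) <= c / 2 * dotv u u.
  apply: le_trans (_ : _ <= c / (2 * (1 + L ^+ 2)) * ((1 + L ^+ 2) * dotv u u)) _.
    by rewrite ler_pM2l // mulrDl mul1r lerD2l.
  by rewrite (_ : _ * (_ * _) = c / 2 * dotv u u) //; field; rewrite gt_eqF.
lra.
Qed.

Lemma calm_minimax_of_hess : max_attained f -> calm_local_minimax f xb yb.
Proof.
move=> max_att.
have [dy dy0 ymax] := negdef_hess_ymax.
have [dx dx0 xmin] := schur_hess_xmin.
have [L L0 SL] := enorm_mulmx_bounded (schur_shift H).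
have L1 : 0 < 1 + L by rewrite ltr_wpDr.
exists (Num.min dy dx); first by rewrite lt_min dy0 dx0.
exists (fun d => (1 + L) * d); split.
- split; [by rewrite mulr0 | by move=> d d0; exact: mulr_ge0 (ltW L1) d0 |].
  move=> e e0; exists (e / (1 + L)); first by rewrite divr_gt0.
  by move=> d _ de; rewrite mulrC -ler_pdivlMr.
- by exists (1 + L); exists 1.
move=> d d0; rewrite le_min => /andP[ddy ddx] x y hx hy; split.
  by have := ymax _ (le_trans hy ddy); rewrite subrKC.
apply: le_trans (xmin _ (le_trans hx ddx)) _; rewrite subrKC.
apply: ballmax_ub => //; first by rewrite mulr_ge0 ?ltW.
rewrite /cball /= addrAC subrr add0r; apply: le_trans (SL _) _.
by have := ler_wpM2l L0 hx; rewrite mulrDl mul1r; lra.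
Qed.

End SufficientConditions.

Unset Implicit Arguments.
Local Close Scope classical_set_scope.

Theorem mainTheorem15 (R : realType) (n m : nat)
  (f : 'rV[R]_n -> 'rV[R]_m -> R) (xb : 'rV[R]_n) (yb : 'rV[R]_m)
  (g : 'rV[R]_(n + m)) (H : 'M[R]_(n + m)) :
  max_attained f ->
  twice_diff_at (fun z : 'rV[R]_(n + m) => f (lsubmx z) (rsubmx z))
    (row_mx xb yb) g H ->
  ((g = 0 /\ negdef (drsubmx H) /\
     (forall u : 'rV[R]_n, u != 0 -> exists h : 'rV[R]_m, 0 < qform H (row_mx u h)))
     -> calm_local_minimax f xb yb)
  /\
  (calm_local_minimax f xb yb ->
     g = 0 /\ negsemidef (drsubmx H) /\
     (forall u : 'rV[R]_n, exists h : 'rV[R]_m, 0 <= qform H (row_mx u h))).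
Proof.
move=> max_att expansion; split.
  move=> [g0 [Dneg xpos]]; rewrite g0 in expansion.
  exact: calm_minimax_of_hess expansion Dneg xpos max_att.
move=> calm; have g0 := calm_minimax_grad_eq0 max_att calm (twice_diff_at_has_grad expansion).
rewrite g0 in expansion *; split => //; split.
  exact: (calm_minimax_hess_yy calm expansion).
exact: (calm_minimax_hess_dir max_att calm expansion).
Qed.
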